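(* Let $I$ be a finite set and $T$ a tree on $I$. The lattice $[\hat{0},T]$ (an interval of $\operatorname{For}(I)$) is supersolvable.
   Context: A tree on a finite set $I$ is a (non-planar) rooted binary tree whose leaves are bijectively labeled by $I$: vertices are inner vertices (valence $3$) and leaves and the root (valence $1$), edges oriented towards the root; one-leaf trees are allowed. A forest on $I$ is a set of trees whose leaf sets partition $I$. For forests $F,G$ on $I$, $F \leq G$ if there is a continuous map $F\to G$ which (D1) is increasing with respect to orientation towards the root, (D2) maps inner vertices to inner vertices injectively, (D3) is the identity of $I$ on leaves, (D4) is injective on each tree of $F$. This gives the poset $\operatorname{For}(I)$, with minimum $\hat{0}$ (no inner vertices); $[\hat{0},T]$ is a lattice. A finite lattice is supersolvable if it contains a maximal chain which, together with any other chain of the lattice, generates a distributive sublattice. *)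

From mathcomp Require Import all_boot.
Set Implicit Arguments. Unset Strict Implicit. Unset Printing Implicit Defensive.

(* A vertex v of a forest (leaf or inner vertex; roots are not recorded) is *)
(* encoded by the set of leaves lying below v.  A non-planar rooted binary  *)
(* forest with leaves labelled bijectively by I is the same thing as a set  *)
(* F of nonempty subsets of I which contains all singletons (the leaves),   *)
(* is laminar, and in which every cluster of size >= 2 (inner vertex) is    *)
(* the disjoint union of exactly two maximal proper sub-clusters (its two   *)
(* children).  The trees of F are its maximal clusters.                     *)
Section Forests.
Variable I : finType.

Definition is_forest (F : {set {set I}}) : Prop :=
  [/\ set0 \notin F,
      (forall i : I, [set i] \in F),
      (forall C D, C \in F -> D \in F ->
         [\/ C \subset D, D \subset C | [disjoint C & D]]) &
      (forall C, C \in F -> 1 < #|C| ->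
         exists C1 C2, [/\ C1 \in F, C2 \in F, C1 :|: C2 = C,
           [disjoint C1 & C2] &
           forall D, D \in F -> D \proper C -> D \subset C1 \/ D \subset C2])].

Definition is_tree (T : {set {set I}}) : Prop := is_forest T /\ setT \in T.

Definition inner (F : {set {set I}}) (C : {set I}) : Prop := C \in F /\ 1 < #|C|.

Definition is_child (F : {set {set I}}) (D C : {set I}) : Prop :=
  [/\ D \in F, C \in F, D \proper C &
      forall E, E \in F -> ~ (D \proper E /\ E \proper C)].

(* F <= G in For(I): there is a map F -> G satisfying (D1)-(D4).  Such a    *)
(* continuous map is determined (up to the position of the images of the    *)
(* roots, which is irrelevant) by its values phi on vertices, edges going to *)
(* the unique increasing path in G between the images of their endpoints.   *)
Definition forest_le (F G : {set {set I}}) : Prop :=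
  exists phi : {set I} -> {set I},
  [/\
      (forall C, C \in F -> phi C \in G),
      (forall i : I, phi [set i] = [set i]),
      (forall C D, C \in F -> D \in F -> C \subset D -> phi C \subset phi D),
      (forall C, inner F C -> inner G (phi C)) /\
      (forall C D, inner F C -> inner F D -> phi C = phi D -> C = D) &
      (* (D4) injective on each tree: the images of the two edges below an  *)
      (* inner vertex are nontrivial and leave phi C in distinct directions, *)
      (* i.e. phi C is the least vertex of G above both children images.    *)
      (forall C C1 C2, is_child F C1 C -> is_child F C2 C -> C1 <> C2 ->
         [/\ phi C1 \proper phi C, phi C2 \proper phi C &
             forall E, E \in G -> phi C1 :|: phi C2 \subset E ->
               phi C \subset E])].

Definition forest0 : {set {set I}} := [set [set i] | i : I].

Definition interval0 (T : {set {set I}}) (F : {set {set I}}) : Prop :=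
  [/\ is_forest F, forest_le forest0 F & forest_le F T].

End Forests.

Section Lattices.
Variables (X : Type) (D : X -> Prop) (le : X -> X -> Prop).

Definition is_join (x y z : X) : Prop :=
  [/\ D z, le x z, le y z & forall w, D w -> le x w -> le y w -> le z w].

Definition is_meet (x y z : X) : Prop :=
  [/\ D z, le z x, le z y & forall w, D w -> le w x -> le w y -> le w z].

Definition is_lattice : Prop :=
  [/\ (forall x, D x -> le x x),
      (forall x y, D x -> D y -> le x y -> le y x -> x = y),
      (forall x y z, D x -> D y -> D z -> le x y -> le y z -> le x z),
      (forall x y, D x -> D y -> exists z, is_join x y z) &
      (forall x y, D x -> D y -> exists z, is_meet x y z)].

Definition lat_closed (S : X -> Prop) : Prop :=
  (forall x, S x -> D x) /\
  (forall x y z, S x -> S y -> is_join x y z \/ is_meet x y z -> S z).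

Definition generated (S : X -> Prop) (x : X) : Prop :=
  forall S', lat_closed S' -> (forall y, S y -> S' y) -> S' x.

Definition distributive_on (S : X -> Prop) : Prop :=
  forall x y z yz r1 xy xz r2, S x -> S y -> S z ->
    is_join y z yz -> is_meet x yz r1 ->
    is_meet x y xy -> is_meet x z xz -> is_join xy xz r2 -> r1 = r2.

Definition is_chain (K : X -> Prop) : Prop :=
  (forall x, K x -> D x) /\ (forall x y, K x -> K y -> le x y \/ le y x).

Definition maximal_chain (M : X -> Prop) : Prop :=
  is_chain M /\
  forall K, is_chain K -> (forall x, M x -> K x) -> forall x, K x -> M x.

Definition supersolvable : Prop :=
  is_lattice /\
  exists M, maximal_chain M /\
    forall K, is_chain K -> distributive_on (generated (fun x => M x \/ K x)).

End Lattices.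

From mathcomp Require Import all_boot.
From Stdlib Require Import ClassicalEpsilon Classical RelationClasses.
Set Implicit Arguments. Unset Strict Implicit. Unset Printing Implicit Defensive.

(* A forest below [T] is determined by its relation "x and y lie in the same tree",
   which identifies [0^, T] with the lattice of equivalence relations [e] on [I]
   compatible with [T]: two related pairs of distinct points with the same least
   common ancestor in [T] lie in the same class.  Meets are intersections and joins
   are least compatible equivalences containing both relations.

   Listing the inner vertices of [T] by size, the forests [M_k] keeping only the
   first [k] of them form a maximal chain.  Since two pairs merged across the same
   vertex are merged together, for [y <= M_i], [t <= M_(i+1)] and
   [w <= z <= M_(i+1)] with [w] not below [M_i]:
     [M_i /\ (y \/ t) <= y \/ (M_i /\ t)]   and   [z <= w \/ (z /\ M_i)].
   In a finite lattice with such a chain [M], given another chain [K], the map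
   sending an antitone sequence [u_0 >= ... >= u_r] in [K] plus [0^] and [1^] to
   [\/_i (M_i /\ u_i)] turns pointwise max and min into join and meet, so the
   sublattice generated by [M] and [K] is a lattice image of a distributive one. *)

Section ModularChain.
Variables (X : Type) (D : X -> Prop) (le : X -> X -> Prop).
Hypothesis le_refl : forall x, D x -> le x x.
Hypothesis le_anti : forall x y, D x -> D y -> le x y -> le y x -> x = y.
Hypothesis le_trans : forall y x z, D y -> D x -> D z -> le x y -> le y z -> le x z.
Variables join meet : X -> X -> X.
Hypothesis joinP : forall x y, D x -> D y -> is_join D le x y (join x y).
Hypothesis meetP : forall x y, D x -> D y -> is_meet D le x y (meet x y).

Lemma joinD x y : D x -> D y -> D (join x y). Proof. by move=> Dx Dy; case: (joinP Dx Dy). Qed.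
Lemma meetD x y : D x -> D y -> D (meet x y). Proof. by move=> Dx Dy; case: (meetP Dx Dy). Qed.
Hint Resolve joinD meetD : core.

Lemma leUl x y : D x -> D y -> le x (join x y). Proof. by move=> Dx Dy; case: (joinP Dx Dy). Qed.
Lemma leUr x y : D x -> D y -> le y (join x y). Proof. by move=> Dx Dy; case: (joinP Dx Dy). Qed.
Lemma leIl x y : D x -> D y -> le (meet x y) x. Proof. by move=> Dx Dy; case: (meetP Dx Dy). Qed.
Lemma leIr x y : D x -> D y -> le (meet x y) y. Proof. by move=> Dx Dy; case: (meetP Dx Dy). Qed.
Hint Resolve leUl leUr leIl leIr : core.

Lemma leUx x y z : D x -> D y -> D z -> le x z -> le y z -> le (join x y) z.
Proof. by move=> Dx Dy Dz; case: (joinP Dx Dy) => _ _ _; apply. Qed.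

Lemma lexI x y z : D x -> D y -> D z -> le z x -> le z y -> le z (meet x y).
Proof. by move=> Dx Dy Dz; case: (meetP Dx Dy) => _ _ _; apply. Qed.

Lemma join_unique x y z : D x -> D y -> is_join D le x y z -> z = join x y.
Proof. by move=> Dx Dy [Dz xz yz lub]; apply: le_anti; auto; apply: leUx; auto. Qed.

Lemma meet_unique x y z : D x -> D y -> is_meet D le x y z -> z = meet x y.
Proof. by move=> Dx Dy [Dz zx zy glb]; apply: le_anti; auto; apply: lexI; auto. Qed.

Lemma meetC x y : D x -> D y -> meet x y = meet y x.
Proof. by move=> Dx Dy; apply: le_anti; auto; apply: lexI; auto. Qed.

Lemma join_r x y : D x -> D y -> le x y -> join x y = y.
Proof. by move=> Dx Dy xy; apply: le_anti; auto; apply: leUx; auto. Qed.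

Lemma join_l x y : D x -> D y -> le y x -> join x y = x.
Proof. by move=> Dx Dy yx; apply: le_anti; auto; apply: leUx; auto. Qed.

Lemma meet_l x y : D x -> D y -> le x y -> meet x y = x.
Proof. by move=> Dx Dy xy; apply: le_anti; auto; apply: lexI; auto. Qed.

Lemma meet_r x y : D x -> D y -> le y x -> meet x y = y.
Proof. by move=> Dx Dy yx; apply: le_anti; auto; apply: lexI; auto. Qed.

Lemma leI2 x y x' y' : D x -> D y -> D x' -> D y' -> le x x' -> le y y' ->
  le (meet x y) (meet x' y').
Proof.
move=> Dx Dy Dx' Dy' xx' yy'.
by apply: lexI; auto; [apply: (le_trans Dx)|apply: (le_trans Dy)]; auto.
Qed.

Lemma leU2 x y x' y' : D x -> D y -> D x' -> D y' -> le x x' -> le y y' ->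
  le (join x y) (join x' y').
Proof.
move=> Dx Dy Dx' Dy' xx' yy'.
by apply: leUx; auto; [apply: (le_trans Dx')|apply: (le_trans Dy')]; auto.
Qed.

Variables (m : nat -> X) (r : nat).
Hypothesis mD : forall i, D (m i).
Hypothesis le_m0 : forall x, D x -> le (m 0) x.
Hypothesis le_mr : forall x, D x -> le x (m r).
Hypothesis le_mS : forall i, le (m i) (m i.+1).
Hypothesis m_cover : forall i x, i < r -> D x -> le (m i) x -> le x (m i.+1) ->
  x = m i \/ x = m i.+1.
Hypothesis m_modular : forall i y t, i < r -> D y -> D t -> le y (m i) -> le t (m i.+1) ->
  le (meet (m i) (join y t)) (join y (meet (m i) t)).
Hypothesis m_exchange : forall i w z, i < r -> D w -> D z -> le w z -> le z (m i.+1) ->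
  ~ le w (m i) -> le z (join w (meet z (m i))).
Hint Resolve mD : core.

Lemma le_m i j : i <= j -> le (m i) (m j).
Proof.
elim: j => [|j IH]; first by rewrite leqn0 => /eqP ->; auto.
rewrite leq_eqVlt => /orP [/eqP -> | ij]; first by auto.
by apply: (le_trans (mD j)); auto.
Qed.

Definition chainM x := exists2 i, i <= r & x = m i.

Lemma chainM_maximal : maximal_chain D le chainM.
Proof.
split.
  split=> [x [i _ ->] //|x y [i _ ->] [j _ ->]].
  by case: (leqP i j) => ij; [left|right]; apply: le_m => //; exact: ltnW.
move=> K [KD Ktotal] MK x Kx; have Dx := KD x Kx.
suff above : forall k i, i + k = r -> le (m i) x -> chainM x by apply: (above r 0) => //; auto.
elim=> [|k IH] i ikr mix.
  by rewrite addn0 in ikr; subst i; exists r => //; apply: le_anti; auto.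
have ir : i < r by rewrite -ikr -addSnnS leq_addr.
have KmS : K (m i.+1) by apply: MK; exists i.+1.
case: (Ktotal _ _ KmS Kx) => [mSx|xmS]; first by apply: (IH i.+1); rewrite ?addSnnS.
by case: (m_cover ir Dx mix xmS) => ->; [exists i => //; exact: ltnW|exists i.+1].
Qed.

Fixpoint chain_join (u : nat -> X) (i : nat) : X :=
  if i is i'.+1 then join (chain_join u i') (meet (m i) (u i)) else meet (m 0) (u 0).

Section ChainJoin.
Variable u : nat -> X.
Hypothesis uD : forall j, D (u j).

Lemma chain_joinD i : D (chain_join u i).
Proof. by elim: i => /= *; auto. Qed.
Hint Resolve chain_joinD : core.

Lemma chain_join_le_m i : le (chain_join u i) (m i).
Proof.
elim: i => [|i IH] /=; first by auto.
by apply: leUx; auto; apply: (le_trans (mD i)).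
Qed.

Lemma le_chain_join i : le (meet (m i) (u i)) (chain_join u i).
Proof. by case: i => /= *; auto. Qed.

Lemma chain_join0 : chain_join u 0 = m 0.
Proof. by apply: meet_l; auto. Qed.

End ChainJoin.
Hint Resolve chain_joinD : core.

Lemma eq_chain_join u v i : (forall j, u j = v j) -> chain_join u i = chain_join v i.
Proof. by move=> uv; elim: i => /= [|i ->]; rewrite uv. Qed.

Lemma meet_join_step i P Q p q : i < r -> D P -> D Q -> D p -> D q ->
  le P (m i) -> le Q (m i) -> le p (m i.+1) -> le q (m i.+1) -> le p q ->
  le (meet (m i) p) P -> le (meet (m i) q) Q ->
  le (meet (join P p) (join Q q)) (join (meet P Q) p).
Proof.
move=> ir DP DQ Dp Dq Pm Qm pm qm pq pP qQ.
have mQq : le (meet (m i) (join Q q)) Q.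
  by apply: (le_trans (joinD DQ (meetD (mD i) Dq))); auto; apply: leUx; auto.
have mPp : le (meet (m i) (join P p)) P.
  by apply: (le_trans (joinD DP (meetD (mD i) Dp))); auto; apply: leUx; auto.
case: (classic (le p (m i))) => [pmi|npmi].
  have pleP : le p P by apply: (le_trans (meetD (mD i) Dp)); auto; apply: lexI; auto.
  rewrite (join_l DP Dp pleP); apply: (le_trans (meetD DP DQ)); auto.
  apply: lexI; auto; apply: (le_trans (meetD (mD i) (joinD DQ Dq))); auto.
  by apply: leI2; auto.
have DPQ := meetD DP DQ; have DPp := joinD DP Dp; have DQq := joinD DQ Dq.
have Dw := joinD DPQ Dp; have Dz := meetD DPp DQq.
have wz : le (join (meet P Q) p) (meet (join P p) (join Q q)).
  apply: leUx; auto; apply: lexI; auto.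
  - by apply: (le_trans DP); auto.
  - by apply: (le_trans DQ); auto.
  - by apply: (le_trans Dq); auto.
have zm : le (meet (join P p) (join Q q)) (m i.+1).
  apply: (le_trans DPp); auto; apply: leUx; auto.
  by apply: (le_trans (mD i)); auto.
have nwm : ~ le (join (meet P Q) p) (m i).
  by move=> wm; apply: npmi; apply: (le_trans Dw); auto.
apply: (le_trans (joinD Dw (meetD Dz (mD i)))); auto.
apply: leUx; auto; apply: (le_trans DPQ); auto.
apply: lexI; auto.
- apply: (le_trans (meetD (mD i) DPp)); auto.
  by apply: lexI; auto; apply: (le_trans Dz); auto.
- apply: (le_trans (meetD (mD i) DQq)); auto.
  by apply: lexI; auto; apply: (le_trans Dz); auto.
Qed.

Section SecondChain.
Variable K : X -> Prop.
Hypothesis K_chain : is_chain D le K.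

Definition Kbar a := K a \/ a = m 0 \/ a = m r.

Lemma KbarD a : Kbar a -> D a.
Proof. by case: K_chain => KD _ [/KD|[->|->]]. Qed.

Lemma Kbar_total a b : Kbar a -> Kbar b -> le a b \/ le b a.
Proof.
move=> Ka Kb; have Da := KbarD Ka; have Db := KbarD Kb.
case: Ka => [Ka|[->|->]]; [|by left; auto|by right; auto].
case: Kb => [Kb|[->|->]]; [|by right; auto|by left; auto].
by case: K_chain => _; apply.
Qed.

Definition cmax a b := if excluded_middle_informative (le a b) then b else a.
Definition cmin a b := if excluded_middle_informative (le a b) then a else b.

Section Pair.
Variables a b : X.
Hypotheses (Ka : Kbar a) (Kb : Kbar b).
Let Da := KbarD Ka.
Let Db := KbarD Kb.

Lemma cmaxE : le a b /\ cmax a b = b \/ le b a /\ cmax a b = a.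
Proof.
rewrite /cmax; case: (excluded_middle_informative (le a b)) => [ab|nab] /=; first by left.
by right; split=> //; case: (Kbar_total Ka Kb).
Qed.

Lemma cminE : le a b /\ cmin a b = a \/ le b a /\ cmin a b = b.
Proof.
rewrite /cmin; case: (excluded_middle_informative (le a b)) => [ab|nab] /=; first by left.
by right; split=> //; case: (Kbar_total Ka Kb).
Qed.

Lemma Kbar_cmax : Kbar (cmax a b). Proof. by case: cmaxE => [[ab ->]|[ba ->]]. Qed.
Lemma Kbar_cmin : Kbar (cmin a b). Proof. by case: cminE => [[ab ->]|[ba ->]]. Qed.

Lemma le_cmaxl : le a (cmax a b). Proof. by case: cmaxE => [[ab ->]|[ba ->]]; auto. Qed.
Lemma le_cmaxr : le b (cmax a b). Proof. by case: cmaxE => [[ab ->]|[ba ->]]; auto. Qed.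
Lemma cmin_lel : le (cmin a b) a. Proof. by case: cminE => [[ab ->]|[ba ->]]; auto. Qed.
Lemma cmin_ler : le (cmin a b) b. Proof. by case: cminE => [[ab ->]|[ba ->]]; auto. Qed.

Lemma cmax_lub s : le a s -> le b s -> le (cmax a b) s.
Proof. by case: cmaxE => [[ab ->]|[ba ->]]. Qed.

Lemma cmin_glb s : le s a -> le s b -> le s (cmin a b).
Proof. by case: cminE => [[ab ->]|[ba ->]]. Qed.

End Pair.

Lemma cmin_cmaxDr a b c : Kbar a -> Kbar b -> Kbar c ->
  cmin a (cmax b c) = cmax (cmin a b) (cmin a c).
Proof.
move=> Ka Kb Kc.
have Kbc := Kbar_cmax Kb Kc; have Kab := Kbar_cmin Ka Kb; have Kac := Kbar_cmin Ka Kc.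
have Db := KbarD Kb; have Dc := KbarD Kc; have Dbc := KbarD Kbc.
have Dab := KbarD Kab; have Dac := KbarD Kac.
apply: le_anti; [exact/KbarD/Kbar_cmin|exact/KbarD/Kbar_cmax| |].
- by case: (cmaxE Kb Kc) => [[ab ->]|[ba ->]]; [apply: le_cmaxr|apply: le_cmaxl].
- apply: cmax_lub => //; apply: cmin_glb => //; try exact: cmin_lel.
  + by apply: (le_trans Db) => //; [exact: cmin_ler|exact: le_cmaxl].
  + by apply: (le_trans Dc) => //; [exact: cmin_ler|exact: le_cmaxr].
Qed.

Definition Kseq (u : nat -> X) :=
  (forall i, Kbar (u i)) /\ (forall i j, i <= j -> le (u j) (u i)).

Lemma KseqD u : Kseq u -> forall j, D (u j).
Proof. by case=> Ku _ j; apply: KbarD. Qed.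

Lemma Kseq_cmax u v : Kseq u -> Kseq v -> Kseq (fun j => cmax (u j) (v j)).
Proof.
move=> [Ku u_anti] [Kv v_anti]; split=> [j|i j ij]; first exact: Kbar_cmax.
have Dmax := KbarD (Kbar_cmax (Ku i) (Kv i)).
apply: cmax_lub => //.
- by apply: (le_trans (KbarD (Ku i))); [exact: KbarD|by []|exact: u_anti|exact: le_cmaxl].
- by apply: (le_trans (KbarD (Kv i))); [exact: KbarD|by []|exact: v_anti|exact: le_cmaxr].
Qed.

Lemma Kseq_cmin u v : Kseq u -> Kseq v -> Kseq (fun j => cmin (u j) (v j)).
Proof.
move=> [Ku u_anti] [Kv v_anti]; split=> [j|i j ij]; first exact: Kbar_cmin.
have Dmin := KbarD (Kbar_cmin (Ku j) (Kv j)).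
apply: cmin_glb => //.
- by apply: (le_trans (KbarD (Ku j))); [by []|exact: KbarD|exact: cmin_lel|exact: u_anti].
- by apply: (le_trans (KbarD (Kv j))); [by []|exact: KbarD|exact: cmin_ler|exact: v_anti].
Qed.

Lemma chain_join_cmax u v i : Kseq u -> Kseq v ->
  chain_join (fun j => cmax (u j) (v j)) i = join (chain_join u i) (chain_join v i).
Proof.
move=> Su Sv; have [Ku _] := Su; have [Kv _] := Sv.
have Du := KseqD Su; have Dv := KseqD Sv.
have Dw j : D (cmax (u j) (v j)) by exact/KbarD/Kbar_cmax.
elim: i => [|i IH]; first by rewrite !chain_join0 // join_l; auto.
rewrite /= IH.
move: (chain_joinD Du i) (chain_joinD Dv i).
move: (chain_join u i) (chain_join v i) => P Q DP DQ.
apply: le_anti; auto.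
- apply: leUx; auto; first by apply: leU2; auto.
  case: (cmaxE (Ku i.+1) (Kv i.+1)) => [[ab ->]|[ba ->]].
  + by apply: (le_trans (joinD DQ (meetD (mD _) (Dv _)))); auto.
  + by apply: (le_trans (joinD DP (meetD (mD _) (Du _)))); auto.
- apply: leUx; auto; apply: leUx; auto.
  + by apply: (le_trans (joinD DP DQ)); auto.
  + apply: (le_trans (meetD (mD _) (Dw _))); auto.
    by apply: leI2; auto; exact: le_cmaxl.
  + by apply: (le_trans (joinD DP DQ)); auto.
  + apply: (le_trans (meetD (mD _) (Dw _))); auto.
    by apply: leI2; auto; exact: le_cmaxr.
Qed.

Lemma chain_join_cmin u v i : Kseq u -> Kseq v -> i <= r ->
  chain_join (fun j => cmin (u j) (v j)) i = meet (chain_join u i) (chain_join v i).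
Proof.
move=> Su Sv; have [Ku u_anti] := Su; have [Kv v_anti] := Sv.
have Du := KseqD Su; have Dv := KseqD Sv.
have Dw j : D (cmin (u j) (v j)) by exact/KbarD/Kbar_cmin.
elim: i => [|i IH] ir; first by rewrite !chain_join0 // meet_l; auto.
rewrite /= IH; last exact: ltnW.
have uP : le (meet (m i) (meet (m i.+1) (u i.+1))) (chain_join u i).
  apply: (le_trans (meetD (mD i) (Du i))); auto; last exact: le_chain_join.
  by apply: leI2; auto; apply: (le_trans (Du i.+1)); auto.
have vQ : le (meet (m i) (meet (m i.+1) (v i.+1))) (chain_join v i).
  apply: (le_trans (meetD (mD i) (Dv i))); auto; last exact: le_chain_join.
  by apply: leI2; auto; apply: (le_trans (Dv i.+1)); auto.
move: uP vQ (chain_join_le_m Du i) (chain_join_le_m Dv i) (chain_joinD Du i) (chain_joinD Dv i).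
move: (chain_join u i) (chain_join v i) => P Q uP vQ Pm Qm DP DQ.
apply: le_anti; auto.
- apply: leUx; auto; apply: lexI; auto.
  + by apply: (le_trans DP); auto.
  + by apply: (le_trans DQ); auto.
  + apply: (le_trans (meetD (mD _) (Du i.+1))); auto.
    by apply: leI2; auto; exact: cmin_lel.
  + apply: (le_trans (meetD (mD _) (Dv i.+1))); auto.
    by apply: leI2; auto; exact: cmin_ler.
- case: (cminE (Ku i.+1) (Kv i.+1)) => [[uv ->]|[vu ->]].
    by apply: (meet_join_step ir); auto; apply: leI2; auto.
  rewrite (meetC DP DQ) [X in le X _]meetC; auto.
  by apply: (meet_join_step ir); auto; apply: leI2; auto.
Qed.

Definition chain_image x := exists2 u, Kseq u & x = chain_join u r.

Lemma chain_imageD x : chain_image x -> D x.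
Proof. by case=> u Su ->; apply/chain_joinD/KseqD. Qed.

Lemma chain_image_closed : lat_closed D le chain_image.
Proof.
split=> [|x y z [u Su ->] [v Sv ->] [zj|zm]]; first exact: chain_imageD.
- exists (fun j => cmax (u j) (v j)); first exact: Kseq_cmax.
  rewrite chain_join_cmax //; apply: join_unique zj; exact/chain_joinD/KseqD.
- exists (fun j => cmin (u j) (v j)); first exact: Kseq_cmin.
  rewrite chain_join_cmin //; apply: meet_unique zm; exact/chain_joinD/KseqD.
Qed.

Lemma chain_image_m j : j <= r -> chain_image (m j).
Proof.
move=> jr; pose u i := if i <= j then m r else m 0.
have uD i : D (u i) by rewrite /u; case: ifP.
exists u.
  split=> [i|i i' ii']; first by rewrite /u; case: ifP; right; auto.
  rewrite /u; case: ifP => [i'j|_]; first by rewrite (leq_trans ii' i'j); auto.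
  exact: le_m0 (uD i).
suff -> : forall i, chain_join u i = m (minn i j) by rewrite (minn_idPr jr).
elim=> [|i IH]; first by rewrite min0n chain_join0.
rewrite /= IH /u; case: (leqP i.+1 j) => ij.
  by rewrite meet_l ?join_r ?(minn_idPl ij) ?(minn_idPl (ltnW ij)); auto.
by rewrite meet_r ?join_l ?(minn_idPr ij) ?(minn_idPr (ij : j <= i)); auto.
Qed.

Lemma chain_image_K x : K x -> chain_image x.
Proof.
move=> Kx; have Dx : D x by case: K_chain => KD _; apply: KD.
exists (fun _ => x); first by split=> *; [left|apply: le_refl].
suff -> : forall i, chain_join (fun _ => x) i = meet (m i) x by rewrite meet_r; auto.
by elim=> [|i IH] //=; rewrite IH join_r; auto; apply: leI2; auto.
Qed.

Lemma chain_image_distributive : distributive_on D le chain_image.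
Proof.
move=> x y z yz r1 xy xz r2 [u Su ->] [v Sv ->] [w Sw ->] yzj r1m xym xzm r2j.
have Du := KseqD Su; have Dv := KseqD Sv; have Dw := KseqD Sw.
have Svw := Kseq_cmax Sv Sw; have Suv := Kseq_cmin Su Sv; have Suw := Kseq_cmin Su Sw.
have Dj s : Kseq s -> D (chain_join s r) by move=> Ss; exact/chain_joinD/KseqD.
have eyz : yz = chain_join (fun j => cmax (v j) (w j)) r.
  by rewrite chain_join_cmax //; apply: join_unique yzj; apply: Dj.
subst yz.
have -> : r1 = chain_join (fun j => cmin (u j) (cmax (v j) (w j))) r.
  by rewrite chain_join_cmin //; apply: meet_unique r1m; apply: Dj.
have exy : xy = chain_join (fun j => cmin (u j) (v j)) r.
  by rewrite chain_join_cmin //; apply: meet_unique xym; apply: Dj.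
have exz : xz = chain_join (fun j => cmin (u j) (w j)) r.
  by rewrite chain_join_cmin //; apply: meet_unique xzm; apply: Dj.
subst xy xz.
have -> : r2 = chain_join (fun j => cmax (cmin (u j) (v j)) (cmin (u j) (w j))) r.
  by rewrite chain_join_cmax //; apply: join_unique r2j; apply: Dj.
by apply: eq_chain_join => j; apply: cmin_cmaxDr; [case: Su|case: Sv|case: Sw].
Qed.

End SecondChain.

Theorem supersolvable_of_modular_chain : supersolvable D le.
Proof.
split.
  split=> // [x y z Dx Dy Dz|x y Dx Dy|x y Dx Dy].
  - exact: (le_trans Dy).
  - by exists (join x y); apply: joinP.
  - by exists (meet x y); apply: meetP.
exists chainM; split; first exact: chainM_maximal.
move=> K K_chain x y z yz r1 xy xz r2 gx gy gz.
have gen_image t : generated D le (fun t => chainM t \/ K t) t -> chain_image K t.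
  apply; first exact: chain_image_closed.
  by move=> s [[j jr ->]|Ks]; [apply: chain_image_m|apply: chain_image_K].
exact: (chain_image_distributive K_chain) (gen_image _ gx) (gen_image _ gy) (gen_image _ gz).
Qed.

End ModularChain.

Section Forests.
Variable I : finType.
Implicit Types (F G : {set {set I}}) (C S Y : {set I}).

(* The least cluster of [F] containing [S], or [setT] if there is none. *)
Definition hull F S : {set I} := \bigcap_(C in F | S \subset C) C.

Definition same_tree F (x y : I) : Prop := exists2 C, C \in F & (x \in C) && (y \in C).

Definition same_tree_le F G := forall x y, same_tree F x y -> same_tree G x y.

Definition splits F C C1 C2 := [/\ C1 \in F, C2 \in F, C1 :|: C2 = C, [disjoint C1 & C2] &
  forall D, D \in F -> D \proper C -> D \subset C1 \/ D \subset C2].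

Lemma hull_min F S C : C \in F -> S \subset C -> hull F S \subset C.
Proof. by move=> CF SC; apply: bigcap_inf; rewrite CF. Qed.

Lemma sub_hull F S : S \subset hull F S.
Proof. by apply/bigcapsP => C /andP []. Qed.

Lemma mem_hull F S x : x \in S -> x \in hull F S.
Proof. exact: (subsetP (sub_hull F S)). Qed.

Lemma hullS F S S' : S \subset S' -> hull F S \subset hull F S'.
Proof.
move=> SS'; apply/bigcapsP => C /andP [CF S'C]; apply: hull_min => //.
exact: subset_trans SS' S'C.
Qed.

Lemma splitsC F C C1 C2 : splits F C C1 C2 -> splits F C C2 C1.
Proof.
case=> C1F C2F eC dis below; split=> //; first by rewrite setUC.
  by rewrite disjoint_sym.
by move=> D DF DC; case: (below D DF DC); auto.
Qed.

Lemma splits_sub F C C1 C2 : splits F C C1 C2 -> C1 \subset C /\ C2 \subset C.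
Proof. by case=> _ _ <- _ _; rewrite subsetUl subsetUr. Qed.

Section Forest.
Variable F : {set {set I}}.
Hypothesis hF : is_forest F.

Lemma forest_nonempty C : C \in F -> exists x, x \in C.
Proof.
case: hF => F0 _ _ _ CF; case: (set_0Vmem C) => [C0|[x xC]]; last by exists x.
by move: F0; rewrite -C0 CF.
Qed.

Lemma forest_set1 i : [set i] \in F.
Proof. by case: hF. Qed.

Lemma forest_laminar C D x : C \in F -> D \in F -> x \in C -> x \in D ->
  C \subset D \/ D \subset C.
Proof.
case: hF => _ _ lam _ CF DF xC xD; case: (lam C D CF DF) => [||dis]; auto.
by rewrite (disjointFr dis xC) in xD.
Qed.

Lemma forest_splits C : C \in F -> 1 < #|C| -> exists C1 C2, splits F C C1 C2.
Proof.
case: hF => _ _ _ has_halves CF C_2.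
by case: (has_halves C CF C_2) => C1 [C2 [*]]; exists C1, C2.
Qed.

Lemma forest_small C : C \in F -> #|C| <= 1 -> exists i, C = [set i].
Proof.
move=> CF C1; case: (forest_nonempty CF) => x xC.
have /cards1P [i ->] : #|C| == 1 by rewrite eqn_leq C1 card_gt0; apply/set0Pn; exists x.
by exists i.
Qed.

Lemma forest_card_gt1 C D : D \in F -> D \proper C -> 1 < #|C|.
Proof.
move=> DF DC; apply: leq_trans (proper_card DC).
by case: (forest_nonempty DF) => x xD; rewrite ltnS card_gt0; apply/set0Pn; exists x.
Qed.

Lemma hull_in S : (exists x, x \in S) -> (exists2 C, C \in F & S \subset C) -> hull F S \in F.
Proof.
move=> [x xS] [C CF SC].
have exP : exists n, [exists C in F, (S \subset C) && (#|C| == n)].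
  by exists #|C|; apply/existsP; exists C; rewrite CF SC eqxx.
case: (ex_minnP exP) => n /existsP [C0 /and3P [C0F SC0 /eqP C0n]] minimal.
suff -> : hull F S = C0 by [].
apply/eqP; rewrite eqEsubset hull_min //=; apply/bigcapsP => C' /andP [C'F SC'].
have xC0 : x \in C0 by apply: (subsetP SC0).
have xC' : x \in C' by apply: (subsetP SC').
case: (forest_laminar C0F C'F xC0 xC') => // C'C0.
have : n <= #|C'| by apply: minimal; apply/existsP; exists C'; rewrite C'F SC' eqxx.
by rewrite -C0n => C0C'; have /eqP -> : C' == C0 by rewrite eqEcard C'C0 C0C'.
Qed.

Lemma hull_id C : C \in F -> hull F C = C.
Proof. by move=> CF; apply/eqP; rewrite eqEsubset hull_min // sub_hull. Qed.

Lemma splits_proper C C1 C2 : splits F C C1 C2 -> C1 \proper C.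
Proof.
move=> hs; have [C1C _] := splits_sub hs; case: hs => _ C2F eC dis _.
rewrite properEneq C1C andbT; apply/eqP => C1eC.
case: (forest_nonempty C2F) => y yC2.
have yC1 : y \in C1 by rewrite C1eC -eC inE yC2 orbT.
by rewrite (disjointFr dis yC1) in yC2.
Qed.

Lemma splits_neq C C1 C2 : splits F C C1 C2 -> C1 <> C2.
Proof.
case=> C1F _ _ dis _ C12; case: (forest_nonempty C1F) => x xC1.
by have := disjointFr dis xC1; rewrite -C12 xC1.
Qed.

Lemma splits_child C C1 C2 : C \in F -> splits F C C1 C2 -> is_child F C1 C.
Proof.
move=> CF hs; have C1C := splits_proper hs.
case: hs => C1F C2F eC dis below; split=> // E EF [C1E EC].
case: (below E EF EC) => [EC1|EC2].
  by move: (proper_sub_trans C1E EC1); rewrite properxx.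
case: (forest_nonempty C1F) => x xC1.
have : x \in C2 by apply: (subsetP EC2); apply: (subsetP (proper_sub C1E)).
by rewrite (disjointFr dis xC1).
Qed.

Lemma child_splits D C C1 C2 : is_child F D C -> splits F C C1 C2 -> D = C1 \/ D = C2.
Proof.
case=> DF CF DC maxD hs; have [C1C C2C] := (splits_proper hs, splits_proper (splitsC hs)).
case: (hs) => C1F C2F _ _ below.
case: (below D DF DC) => [DC1|DC2]; [left|right]; apply/eqP; rewrite eqEproper ?DC1 ?DC2 /=.
  by apply/negP => DC1'; apply: (maxD C1 C1F).
by apply/negP => DC2'; apply: (maxD C2 C2F).
Qed.

Lemma children_splits C D1 D2 : is_child F D1 C -> is_child F D2 C -> D1 <> D2 ->
  splits F C D1 D2.
Proof.
move=> c1 c2 D12; have [D1F CF D1C _] := c1.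
case: (forest_splits CF (forest_card_gt1 D1F D1C)) => C1 [C2 hs].
move: D12; case: (child_splits c1 hs) => ->; case: (child_splits c2 hs) => -> // _.
exact: splitsC.
Qed.

Lemma hull_splits C C1 C2 Y : C \in F -> splits F C C1 C2 -> Y \subset C ->
  (exists2 a, a \in Y & a \in C1) -> (exists2 b, b \in Y & b \in C2) -> hull F Y = C.
Proof.
move=> CF hs YC [a aY aC1] [b bY bC2]; case: hs => C1F C2F eC dis below.
have hY : hull F Y \in F by apply: hull_in; [exists a|exists C].
apply/eqP; rewrite eqEproper hull_min //=; apply/negP => hYC.
case: (below _ hY hYC) => [/subsetP hC1|/subsetP hC2].
  by move/hC1: (mem_hull F bY) => /(disjointFr dis); rewrite bC2.
by move/hC2: (mem_hull F aY); rewrite (disjointFr dis aC1).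
Qed.

Lemma hull_meets_halves C C1 C2 Y : splits F C C1 C2 -> hull F Y = C -> Y \subset C ->
  (exists2 a, a \in Y & a \in C1) /\ (exists2 b, b \in Y & b \in C2).
Proof.
have meets C' C'' : splits F C C' C'' -> hull F Y = C -> Y \subset C ->
    exists2 a, a \in Y & a \in C'.
  move=> hs hY YC; have C''C := splits_proper (splitsC hs); case: hs => _ C''F eC _ _.
  case: (boolP [exists a, (a \in Y) && (a \in C')]) => [/existsP [a /andP []]|]; first by exists a.
  rewrite negb_exists => /forallP noC'.
  have YC'' : Y \subset C''.
    apply/subsetP => y yY; have := subsetP YC y yY; rewrite -eC inE.
    by have := noC' y; rewrite yY /= => /negbTE ->.
  have := hull_min C''F YC''; rewrite hY => CC''.
  by move: (proper_sub_trans C''C CC''); rewrite properxx.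
by move=> hs hY YC; split; [apply: (meets C1 C2)|apply: (meets C2 C1)] => //; apply: splitsC.
Qed.

Lemma same_tree_refl x : same_tree F x x.
Proof. by exists [set x]; [apply: forest_set1|rewrite inE eqxx]. Qed.

Lemma same_tree_sym x y : same_tree F x y -> same_tree F y x.
Proof. by case=> C CF /andP [xC yC]; exists C; rewrite ?xC ?yC. Qed.

Lemma same_tree_trans x y z : same_tree F x y -> same_tree F y z -> same_tree F x z.
Proof.
case=> C CF /andP [xC yC] [D DF /andP [yD zD]].
case: (forest_laminar CF DF yC yD) => [/subsetP CD|/subsetP DC].
- by exists D; rewrite ?zD ?CD.
- by exists C; rewrite ?xC ?DC.
Qed.

Lemma same_tree_equiv : Equivalence (same_tree F).
Proof. by split; [exact: same_tree_refl|exact: same_tree_sym|exact: same_tree_trans]. Qed.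

Lemma same_tree_cover S x : x \in S -> (forall y, y \in S -> same_tree F x y) ->
  exists2 D, D \in F & S \subset D.
Proof.
elim: {S}_.+1 {-2}S (ltnSn #|S|) => // n IH S Sn xS xS_tree.
case: (boolP (S \subset [set x])) => [Sx|/subsetPn [y yS yx]].
  by exists [set x]; rewrite ?forest_set1.
have xSy : x \in S :\ y by rewrite !inE xS andbT; apply: contraNneq yx => ->; rewrite inE.
have Syn : #|S :\ y| < n by move: Sn; rewrite (cardsD1 y S) yS.
case: (IH _ Syn xSy) => [z /setD1P [_ zS]|D DF SyD]; first exact: xS_tree.
case: (xS_tree y yS) => E EF /andP [xE yE].
case: (forest_laminar DF EF (subsetP SyD x xSy) xE) => [/subsetP DE|/subsetP ED].
- exists E => //; apply/subsetP => z zS; case: (eqVneq z y) => [-> //|zy].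
  by apply: DE; apply: (subsetP SyD); rewrite !inE zy.
- exists D => //; apply/subsetP => z zS; case: (eqVneq z y) => [->|zy]; first exact: ED.
  by apply: (subsetP SyD); rewrite !inE zy.
Qed.

End Forest.

Section ForestLe.
Variables F G : {set {set I}}.
Hypotheses (hF : is_forest F) (hG : is_forest G) (hFG : forest_le F G).

(* The map witnessing [F <= G] is forced: it sends each vertex of [F] to the
   least vertex of [G] above its leaves. *)
Lemma forest_le_hull :
  [/\ forall C, C \in F -> hull G C \in G,
      forall C C', C \in F -> C' \in F -> 1 < #|C| -> 1 < #|C'| ->
        hull G C = hull G C' -> C = C' &
      forall C C1 C2, C \in F -> splits F C C1 C2 -> hull G C1 \proper hull G C].
Proof.
case: hFG => phi [phiG phi1 phiS [_ phi_inj] phi_split].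
have sub_phi C : C \in F -> C \subset phi C.
  move=> CF; apply/subsetP => x xC.
  by have := phiS _ _ (forest_set1 hF x) CF; rewrite phi1 !sub1set xC => /(_ isT).
have phi_hull C : C \in F -> phi C = hull G C.
  elim: {C}_.+1 {-2}C (ltnSn #|C|) => // n IH C; rewrite ltnS => Cn CF.
  case: (leqP #|C| 1) => [C_1|C_2].
    by case: (forest_small hF CF C_1) => i ->; rewrite phi1 hull_id //; apply: forest_set1.
  case: (forest_splits hF CF C_2) => C1 [C2 hs].
  have [C1C C2C] := (splits_proper hF hs, splits_proper hF (splitsC hs)).
  have [C1F C2F _ _ _] := hs.
  have phi1E : phi C1 = hull G C1 by apply: IH => //; apply: leq_trans (proper_card C1C) Cn.
  have phi2E : phi C2 = hull G C2 by apply: IH => //; apply: leq_trans (proper_card C2C) Cn.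
  have [_ _ least] := phi_split C C1 C2 (splits_child hF CF hs)
    (splits_child hF CF (splitsC hs)) (splits_neq hF hs).
  have hC : hull G C \in G.
    by apply: (hull_in hG (forest_nonempty hF CF)); exists (phi C); auto.
  apply/eqP; rewrite eqEsubset hull_min ?sub_phi ?andbT //; last exact: phiG.
  apply: least => //; rewrite phi1E phi2E subUset.
  by rewrite !hullS ?(proper_sub C1C) ?(proper_sub C2C).
split.
- by move=> C CF; rewrite -phi_hull //; apply: phiG.
- by move=> C C' CF C'F C_2 C'_2; rewrite -!phi_hull // => /phi_inj; apply.
- move=> C C1 C2 CF hs; have [C1F _ _ _ _] := hs.
  have [C1C _ _] := phi_split C C1 C2 (splits_child hF CF hs)
    (splits_child hF CF (splitsC hs)) (splits_neq hF hs).
  by rewrite -!phi_hull.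
Qed.

Lemma hull_le_in C : C \in F -> hull G C \in G.
Proof. by case: forest_le_hull => inG _ _; apply: inG. Qed.

Lemma hull_le_inj C C' : C \in F -> C' \in F -> 1 < #|C| -> 1 < #|C'| ->
  hull G C = hull G C' -> C = C'.
Proof. by case: forest_le_hull => _ inj _; apply: inj. Qed.

Lemma hull_le_proper C C1 C2 : C \in F -> splits F C C1 C2 -> hull G C1 \proper hull G C.
Proof. by case: forest_le_hull => _ _; apply. Qed.

Lemma hull_le_splits C C1 C2 Y : C \in F -> splits F C C1 C2 -> Y \subset C ->
  (exists2 a, a \in Y & a \in C1) -> (exists2 b, b \in Y & b \in C2) -> hull G Y = hull G C.
Proof.
move=> CF hs YC [a aY aC1] [b bY bC2].
have [C1F C2F _ _ _] := hs.
have hCG := hull_le_in CF.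
have C_2 : 1 < #|hull G C|.
  apply: leq_trans (subset_leq_card (sub_hull G C)).
  exact: forest_card_gt1 C1F (splits_proper hF hs).
case: (forest_splits hG hCG C_2) => E1 [E2 hE].
have [_ _ _ disE belowE] := hE.
have not_both E : E \in G -> E \proper hull G C ->
    hull G C1 \subset E -> hull G C2 \subset E -> False.
  move=> EG EC C1E C2E.
  suff CE : hull G C \subset E by move: (proper_sub_trans EC CE); rewrite properxx.
  apply: hull_min => //; have [C1C C2C] := splits_sub hs; case: hs => _ _ <- _ _.
  by rewrite subUset (subset_trans (sub_hull G C1) C1E) (subset_trans (sub_hull G C2) C2E).
have aH : a \in hull G C1 by apply: mem_hull.
have bH : b \in hull G C2 by apply: mem_hull.
have YE : Y \subset hull G C by apply: subset_trans YC (sub_hull G C).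
have [E1G E2G _ _ _] := hE.
case: (belowE _ (hull_le_in C1F) (hull_le_proper CF hs)) => [/subsetP C1E|/subsetP C1E];
case: (belowE _ (hull_le_in C2F) (hull_le_proper CF (splitsC hs))) => [/subsetP C2E|/subsetP C2E].
- by case: (not_both E1 E1G (splits_proper hG hE)); apply/subsetP.
- by apply: (hull_splits hG hCG hE YE); [exists a; rewrite ?C1E|exists b; rewrite ?C2E].
- by apply: (hull_splits hG hCG (splitsC hE) YE); [exists a; rewrite ?C1E|exists b; rewrite ?C2E].
- by case: (not_both E2 E2G (splits_proper hG (splitsC hE))); apply/subsetP.
Qed.

Lemma same_tree_le_of_le : same_tree_le F G.
Proof.
move=> x y [C CF /andP [xC yC]].
by exists (hull G C); [apply: hull_le_in|rewrite !mem_hull].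
Qed.

End ForestLe.

Lemma hull_in_of_same_tree F G C : is_forest F -> is_forest G -> same_tree_le F G ->
  C \in F -> hull G C \in G.
Proof.
move=> hF hG FG CF; case: (forest_nonempty hF CF) => x xC.
apply: (hull_in hG); first by exists x.
by apply: (same_tree_cover hG xC) => y yC; apply: FG; exists C; rewrite ?xC ?yC.
Qed.

End Forests.

Definition asbool (P : Prop) : bool := if excluded_middle_informative P then true else false.

Lemma asboolP (P : Prop) : reflect P (asbool P).
Proof. by rewrite /asbool; case: excluded_middle_informative => h; constructor. Qed.

Section Tree.
Variables (I : finType) (T : {set {set I}}).
Hypothesis hT : is_tree T.
Implicit Types (F G : {set {set I}}) (C S Y : {set I}).

Let hTf : is_forest T := proj1 hT.

Lemma hullT_in S : (exists x, x \in S) -> hull T S \in T.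
Proof. by move=> S0; apply: (hull_in hTf) => //; exists setT; [case: hT|apply: subsetT]. Qed.

Definition lca (x y : I) := hull T [set x; y].

(* Condition (D2) seen on relations: the forest vertex joining [x1] and [y1] is
   determined by the vertex [lca x1 y1] of [T] it maps to. *)
Definition compatible (e : I -> I -> Prop) := forall x1 y1 x2 y2,
  e x1 y1 -> e x2 y2 -> x1 != y1 -> lca x1 y1 = lca x2 y2 -> e x1 x2.

Lemma lcaC x y : lca x y = lca y x.
Proof. by rewrite /lca setUC. Qed.

Lemma mem_lcal x y : x \in lca x y.
Proof. by rewrite mem_hull // !inE eqxx. Qed.

Lemma mem_lcar x y : y \in lca x y.
Proof. by rewrite mem_hull // !inE eqxx orbT. Qed.

Lemma lca_neq x1 y1 x2 y2 : x1 != y1 -> lca x1 y1 = lca x2 y2 -> x2 != y2.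
Proof.
move=> xy1 lca12; apply: contraNneq xy1 => xy2.
have : lca x1 y1 = [set x2] by rewrite lca12 /lca xy2 setUid hull_id ?forest_set1.
move=> lca1; have := mem_lcal x1 y1; have := mem_lcar x1 y1.
by rewrite lca1 !inE => /eqP -> /eqP ->.
Qed.

Section BelowTree.
Variable F : {set {set I}}.
Hypotheses (hF : is_forest F) (hFT : forest_le F T).

Lemma same_tree_compatible : compatible (same_tree F).
Proof.
have hull_pair x y : same_tree F x y -> x != y ->
    [/\ hull F [set x; y] \in F, 1 < #|hull F [set x; y]| &
        lca x y = hull T (hull F [set x; y])].
  move=> [D DF /andP [xD yD]] xy.
  have hxy : hull F [set x; y] \in F.
    apply: (hull_in hF); first by exists x; rewrite !inE eqxx.
    by exists D; rewrite // subUset !sub1set xD yD.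
  have xy_2 : 1 < #|hull F [set x; y]|.
    by apply: leq_trans (subset_leq_card (sub_hull F _)); rewrite cards2 xy.
  split=> //; case: (forest_splits hF hxy xy_2) => C1 [C2 hs].
  have [m1 m2] := hull_meets_halves hF hs (erefl _) (sub_hull F _).
  by apply: (hull_le_splits hF hTf hFT hxy hs (sub_hull F _)).
move=> x1 y1 x2 y2 xy1 xy2 ne1 lca12.
have [h1F h1_2 lca1] := hull_pair _ _ xy1 ne1.
have [h2F h2_2 lca2] := hull_pair _ _ xy2 (lca_neq ne1 lca12).
have h12 := hull_le_inj hF hTf hFT h1F h2F h1_2 h2_2 (etrans (esym lca1) (etrans lca12 lca2)).
by exists (hull F [set x1; y1]) => //; rewrite {2}h12 !mem_hull // !inE eqxx.
Qed.

(* Otherwise [C] and [x] lie in different halves of the [F]-hull of [x |: C], whose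
   [T]-hull would then not exceed the [T]-hull of the half containing [C]. *)
Lemma mem_cluster C c x : C \in F -> c \in C -> same_tree F x c -> x \in hull T C -> x \in C.
Proof.
move=> CF cC xc xhC; case: (boolP (x \in C)) => // xC; exfalso.
have [E EF /andP [xE cE]] := xc.
have hxCF : hull F (x |: C) \in F.
  apply: (hull_in hF); first by exists x; rewrite !inE eqxx.
  case: (forest_laminar hF CF EF cC cE) => [CE|/subsetP EC]; last by rewrite EC in xC.
  by exists E; rewrite // subUset sub1set xE CE.
have x_hull : x \in hull F (x |: C) by rewrite mem_hull // !inE eqxx.
have C_hull : C \proper hull F (x |: C).
  by apply/properP; split; [apply: subset_trans (sub_hull F _); apply: subsetUr|exists x].
have in_half E1 E2 : splits F (hull F (x |: C)) E1 E2 -> C \subset E1 -> False.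
  move=> hE CE1; have [E1F _ eE _ _] := hE.
  have xE1 : x \notin E1.
    apply/negP => xE1; have xCE1 : x |: C \subset E1 by rewrite subUset sub1set xE1 CE1.
    by move: (proper_sub_trans (splits_proper hF hE) (hull_min E1F xCE1)); rewrite properxx.
  have xE2 : x \in E2 by move: x_hull; rewrite -eE inE (negbTE xE1).
  have xE1_hull : x |: E1 \subset hull F (x |: C).
    by rewrite subUset sub1set x_hull (splits_sub hE).1.
  have hT_eq : hull T (x |: E1) = hull T (hull F (x |: C)).
    apply: (hull_le_splits hF hTf hFT hxCF hE xE1_hull).
    - by exists c; rewrite ?inE (subsetP CE1 c cC) ?orbT.
    - by exists x; rewrite ?inE ?eqxx.
  have : hull T (x |: E1) \subset hull T E1.
    apply: hull_min; first by apply: hullT_in; exists c; apply: (subsetP CE1).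
    by rewrite subUset sub_hull andbT sub1set (subsetP (hullS T CE1)).
  rewrite hT_eq => hE1.
  by move: (proper_sub_trans (hull_le_proper hF hTf hFT hxCF hE) hE1); rewrite properxx.
have hx_2 := forest_card_gt1 hF CF C_hull.
case: (forest_splits hF hxCF hx_2) => D1 [D2 hs]; have [_ _ _ _ below] := hs.
by case: (below C CF C_hull) => CD; [apply: (in_half D1 D2)|apply: (in_half D2 D1 (splitsC hs))].
Qed.

End BelowTree.

Section TwoForests.
Variables F G : {set {set I}}.
Hypotheses (hF : is_forest F) (hFT : forest_le F T) (hG : is_forest G) (hGT : forest_le G T).
Hypothesis FG : same_tree_le F G.

Lemma hullT_hull C : C \in F -> hull T (hull G C) = hull T C.
Proof.
move=> CF; have hCG := hull_in_of_same_tree hF hG FG CF.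
case: (leqP #|hull G C| 1) => [hC_1|hC_2].
  case: (forest_small hG hCG hC_1) => i hCi; rewrite hCi.
  case: (forest_nonempty hF CF) => x xC.
  have : C \subset [set i] by rewrite -hCi sub_hull.
  by rewrite subset1 => /orP [/eqP -> //|/eqP C0]; rewrite C0 inE in xC.
case: (forest_splits hG hCG hC_2) => D1 [D2 hs].
have [m1 m2] := hull_meets_halves hG hs (erefl _) (sub_hull G C).
by rewrite (hull_le_splits hG hTf hGT hCG hs (sub_hull G C) m1 m2).
Qed.

Lemma hull_proper_of_same_tree_le C C' : C \in F -> C' \in F -> C' \subset C ->
  hull T C' \proper hull T C -> hull G C' \proper hull G C.
Proof.
move=> CF C'F C'C hTC'C; rewrite properEneq hullS // andbT; apply/eqP => hGC'C.
by move: hTC'C; rewrite -(hullT_hull C'F) -(hullT_hull CF) hGC'C properxx.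
Qed.

Lemma forest_le_of_same_tree_le : forest_le F G.
Proof.
exists (hull G); split.
- by move=> C; apply: hull_in_of_same_tree.
- by move=> i; rewrite hull_id ?forest_set1.
- by move=> C D _ _; apply: hullS.
- split.
    move=> C [CF C_2]; split; first exact: hull_in_of_same_tree hF hG FG CF.
    exact: leq_trans C_2 (subset_leq_card (sub_hull G C)).
  move=> C D [CF C_2] [DF D_2] hCD; apply: (hull_le_inj hF hTf hFT) => //.
  by rewrite -(hullT_hull CF) -(hullT_hull DF) hCD.
- move=> C C1 C2 ch1 ch2 C12.
  have hs := children_splits hF ch1 ch2 C12.
  have [C1F C2F eC _ _] := hs; have [_ CF _ _] := ch1.
  have [C1C C2C] := splits_sub hs.
  split.
  + by apply: hull_proper_of_same_tree_le => //; apply: (hull_le_proper hF hTf hFT CF hs).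
  + by apply: hull_proper_of_same_tree_le => //; apply: (hull_le_proper hF hTf hFT CF (splitsC hs)).
  + move=> E EG; rewrite subUset => /andP [C1E C2E]; apply: hull_min => //.
    by rewrite -eC subUset (subset_trans (sub_hull G C1)) ?(subset_trans (sub_hull G C2)).
Qed.

Lemma sub_of_same_tree_le : same_tree_le G F -> F \subset G.
Proof.
move=> GF; apply/subsetP => C CF; have hCG := hull_in_of_same_tree hF hG FG CF.
suff -> : C = hull G C by [].
apply/eqP; rewrite eqEsubset sub_hull /=; apply/subsetP => x xhC.
case: (forest_nonempty hF CF) => c cC.
apply: (mem_cluster hF hFT CF cC); first by apply: GF; exists (hull G C); rewrite ?xhC ?mem_hull.
by rewrite -(hullT_hull CF) mem_hull.
Qed.

End TwoForests.

Lemma forest_eq_of_same_tree F G : is_forest F -> forest_le F T -> is_forest G -> forest_le G T ->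
  same_tree_le F G -> same_tree_le G F -> F = G.
Proof.
move=> hF hFT hG hGT FG GF; apply/eqP; rewrite eqEsubset.
by rewrite (sub_of_same_tree_le hF hFT hG hGT FG GF) (sub_of_same_tree_le hG hGT hF hFT GF FG).
Qed.

Section ForestOf.
Variable e : I -> I -> Prop.
Hypotheses (he : Equivalence e) (e_compat : compatible e).

Definition block x : {set I} := [set y | asbool (e x y)].

Definition forest_of : {set {set I}} :=
  [set X | [exists C, [exists x, [&& C \in T, x \in C & X == C :&: block x]]]].

Lemma blockP x y : reflect (e x y) (y \in block x).
Proof. by rewrite inE; apply: asboolP. Qed.

Lemma block_refl x : x \in block x.
Proof. by apply/blockP; reflexivity. Qed.

Lemma block_eq x y : e x y -> block x = block y.
Proof.
move=> xy; apply/setP => z; apply/blockP/blockP => [xz|yz]; last by transitivity y.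
by transitivity x => //; symmetry.
Qed.

Lemma forest_ofP X :
  reflect (exists C x, [/\ C \in T, x \in C & X = C :&: block x]) (X \in forest_of).
Proof.
rewrite inE; apply: (iffP existsP) => [[C /existsP [x /and3P [CT xC /eqP ->]]]|[C [x [CT xC ->]]]].
  by exists C, x.
by exists C; apply/existsP; exists x; rewrite CT xC eqxx.
Qed.

Lemma forest_of_in C x : C \in T -> x \in C -> C :&: block x \in forest_of.
Proof. by move=> CT xC; apply/forest_ofP; exists C, x. Qed.

Lemma forest_of_nonempty X : X \in forest_of -> exists x, x \in X.
Proof. by case/forest_ofP => C [x [CT xC ->]]; exists x; rewrite inE xC block_refl. Qed.

Lemma forest_of_block X z : X \in forest_of -> z \in X ->
  exists2 C, C \in T & X = C :&: block z.
Proof.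
case/forest_ofP => C [x [CT xC ->]] /setIP [zC /blockP xz].
by exists C; rewrite // (block_eq xz).
Qed.

Lemma forest_of_sub_block X z : X \in forest_of -> z \in X -> X \subset block z.
Proof. by move=> XF zX; case: (forest_of_block XF zX) => C _ ->; apply: subsetIr. Qed.

Lemma forest_of_hullE X z : X \in forest_of -> z \in X -> X = hull T X :&: block z.
Proof.
move=> XF zX; case: (forest_of_block XF zX) => C CT XE.
apply/eqP; rewrite eqEsubset subsetI sub_hull (forest_of_sub_block XF zX) /=.
by rewrite {2}XE setSI // hull_min // XE subsetIl.
Qed.

Lemma forest_of_splits X : X \in forest_of -> 1 < #|X| ->
  exists X1 X2, splits forest_of X X1 X2.
Proof.
move=> XF X_2; case: (forest_of_nonempty XF) => z zX.
have XE := forest_of_hullE XF zX.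
have hXT : hull T X \in T by apply: hullT_in; exists z.
have hX_2 : 1 < #|hull T X| by apply: leq_trans X_2 (subset_leq_card (sub_hull T X)).
case: (forest_splits hTf hXT hX_2) => H1 [H2 hs]; have [H1T H2T eH disH below] := hs.
have [[a aX aH1] [b bX bH2]] := hull_meets_halves hTf hs (erefl _) (sub_hull T X).
have zX_e y : y \in X -> e z y.
  by move=> yX; apply/blockP; apply: (subsetP (forest_of_sub_block XF zX)).
exists (H1 :&: block z), (H2 :&: block z); split.
- by rewrite (block_eq (zX_e a aX)); apply: forest_of_in.
- by rewrite (block_eq (zX_e b bX)); apply: forest_of_in.
- by rewrite -setIUl eH -XE.
- exact: disjointW (subsetIl _ _) (subsetIl _ _) disH.
move=> Y YF YX; case: (forest_of_nonempty YF) => y yY.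
have yX : y \in X by apply: (subsetP (proper_sub YX)).
have YE := forest_of_hullE YF yY; rewrite -(block_eq (zX_e y yX)) in YE.
have hYT : hull T Y \in T by apply: hullT_in; exists y.
have hYX : hull T Y \proper hull T X.
  rewrite properEneq hullS ?proper_sub // andbT; apply/eqP => hYX.
  by move: YX; rewrite YE hYX -XE properxx.
by rewrite YE; case: (below _ hYT hYX) => hYH; [left|right]; apply: setSI.
Qed.

Lemma forest_of_forest : is_forest forest_of.
Proof.
split.
- by apply/negP => /forest_of_nonempty [x]; rewrite inE.
- move=> i; have -> : [set i] = [set i] :&: block i.
    by apply/setP => z; rewrite in_setI in_set1; case: eqP => // ->; rewrite block_refl.
  by apply: forest_of_in; rewrite ?forest_set1 ?inE.
- move=> X Y /forest_ofP [C [x [CT xC ->]]] /forest_ofP [D [y [DT yD ->]]].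
  case: (classic (e x y)) => [xy|nxy].
    have [_ _ lam _] := hTf; rewrite (block_eq xy).
    case: (lam C D CT DT) => CD; [constructor 1|constructor 2|constructor 3].
    + exact: setSI.
    + exact: setSI.
    + exact: disjointW (subsetIl _ _) (subsetIl _ _) CD.
  constructor 3; rewrite -setI_eq0; apply/eqP/setP => z; rewrite !in_setI in_set0.
  apply/negP => /andP [/andP [_ /blockP xz] /andP [_ /blockP yz]]; apply: nxy.
  by transitivity z => //; symmetry.
- exact: forest_of_splits.
Qed.

Lemma forest_of_ge0 : forest_le (forest0 I) forest_of.
Proof.
have isolated C : C \in forest0 I -> #|C| = 1 by case/imsetP => i _ ->; rewrite cards1.
exists id; split=> //.
- by move=> C /imsetP [i _ ->]; apply: (forest_set1 forest_of_forest).
- by split=> C; [move=> [/isolated ->]|move=> D [/isolated ->]].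
- move=> C C1 C2 [C1F CF C1C _]; exfalso.
  by move: (proper_card C1C); rewrite !isolated.
Qed.

Lemma forest_of_hull_inj X Y : X \in forest_of -> Y \in forest_of -> 1 < #|X| -> 1 < #|Y| ->
  hull T X = hull T Y -> X = Y.
Proof.
move=> XF YF X_2 Y_2 hXY; case: (forest_of_nonempty XF) => z zX.
have hXT : hull T X \in T by apply: hullT_in; exists z.
have hX_2 : 1 < #|hull T X| by apply: leq_trans X_2 (subset_leq_card (sub_hull T X)).
case: (forest_splits hTf hXT hX_2) => H1 [H2 hs]; have [_ _ _ disH _] := hs.
have [[a aX aH1] [b bX bH2]] := hull_meets_halves hTf hs (erefl _) (sub_hull T X).
have YX : Y \subset hull T X by rewrite hXY sub_hull.
have [[a' aY aH1'] [b' bY bH2']] := hull_meets_halves hTf hs (esym hXY) YX.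
have lca_ab x y : x \in hull T X -> y \in hull T X -> x \in H1 -> y \in H2 -> lca x y = hull T X.
  move=> xX yX xH1 yH2; apply: (hull_splits hTf hXT hs); first by rewrite subUset !sub1set xX yX.
  - by exists x; rewrite ?inE ?eqxx.
  - by exists y; rewrite ?inE ?eqxx ?orbT.
have ab : a != b by apply: contraTneq bH2 => <-; rewrite (disjointFr disH aH1).
have lab : lca a b = hull T X by apply: lca_ab; rewrite ?mem_hull.
have lab' : lca a' b' = hull T X by apply: lca_ab; rewrite ?(subsetP YX).
have e_in W w w' : W \in forest_of -> w \in W -> w' \in W -> e w w'.
  by move=> WF wW w'W; apply/blockP; apply: (subsetP (forest_of_sub_block WF wW)).
have eaa' := e_compat (e_in _ _ _ XF aX bX) (e_in _ _ _ YF aY bY) ab (etrans lab (esym lab')).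
by rewrite (forest_of_hullE XF aX) (forest_of_hullE YF aY) -hXY (block_eq eaa').
Qed.

Lemma forest_of_leT : forest_le forest_of T.
Proof.
have hR := forest_of_forest.
have proper_hull X Y : X \in forest_of -> Y \in forest_of -> Y \proper X ->
    hull T Y \proper hull T X.
  move=> XF YF YX; rewrite properEneq hullS ?proper_sub // andbT; apply/eqP => hYX.
  case: (forest_of_nonempty YF) => z zY; have zX := subsetP (proper_sub YX) z zY.
  by move: YX; rewrite (forest_of_hullE YF zY) (forest_of_hullE XF zX) hYX properxx.
exists (hull T); split.
- by move=> X XF; apply/hullT_in/forest_of_nonempty.
- by move=> i; rewrite hull_id ?forest_set1.
- by move=> C D _ _; apply: hullS.
- split; last by move=> X Y [XF X_2] [YF Y_2]; apply: forest_of_hull_inj.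
  move=> X [XF X_2]; split; first by apply/hullT_in/forest_of_nonempty.
  exact: leq_trans X_2 (subset_leq_card (sub_hull T X)).
- move=> X X1 X2 ch1 ch2 X12.
  have hs := children_splits hR ch1 ch2 X12; have [X1F X2F eX _ _] := hs.
  have [_ XF _ _] := ch1.
  split.
  + exact: proper_hull (splits_proper hR hs).
  + exact: proper_hull (splits_proper hR (splitsC hs)).
  + move=> E ET; rewrite subUset => /andP [X1E X2E]; apply: hull_min => //.
    by rewrite -eX subUset (subset_trans (sub_hull T X1)) ?(subset_trans (sub_hull T X2)).
Qed.

Lemma same_tree_forest_of x y : same_tree forest_of x y <-> e x y.
Proof.
split=> [[X XF /andP [xX yX]]|xy].
  by apply/blockP; apply: (subsetP (forest_of_sub_block XF xX)).
exists (setT :&: block x); first by apply: forest_of_in; [case: hT|].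
by rewrite !in_setI !in_setT block_refl; apply/blockP.
Qed.

End ForestOf.

Local Notation interval := (interval0 T).

Lemma interval_forest_of e : Equivalence e -> compatible e -> interval (forest_of e).
Proof.
move=> he e_compat; split.
- exact: forest_of_forest.
- exact: forest_of_ge0.
- exact: forest_of_leT.
Qed.

Lemma interval_compatible F : interval F -> compatible (same_tree F).
Proof. by case=> hF _ hFT; apply: same_tree_compatible. Qed.

Lemma interval_equiv F : interval F -> Equivalence (same_tree F).
Proof. by case=> hF _ _; apply: same_tree_equiv. Qed.

Lemma interval_leE F G : interval F -> interval G -> forest_le F G <-> same_tree_le F G.
Proof.
move=> [hF _ hFT] [hG _ hGT]; split; first exact: same_tree_le_of_le.
exact: forest_le_of_same_tree_le.
Qed.

Lemma interval_le_same_tree F G x y : interval F -> interval G -> forest_le F G ->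
  same_tree F x y -> same_tree G x y.
Proof. by move=> iF iG /(interval_leE iF iG); apply. Qed.

Lemma interval_le_refl F : interval F -> forest_le F F.
Proof. by move=> iF; apply/(interval_leE iF iF). Qed.

Lemma interval_le_anti F G : interval F -> interval G -> forest_le F G -> forest_le G F -> F = G.
Proof.
move=> iF iG /(interval_leE iF iG) FG /(interval_leE iG iF) GF.
by case: iF iG => hF _ hFT [hG _ hGT]; apply: forest_eq_of_same_tree.
Qed.

Lemma interval_le_trans G F H : interval G -> interval F -> interval H ->
  forest_le F G -> forest_le G H -> forest_le F H.
Proof.
move=> iG iF iH /(interval_leE iF iG) FG /(interval_leE iG iH) GH.
by apply/(interval_leE iF iH) => x y /FG /GH.
Qed.

Definition meet_rel F G x y := same_tree F x y /\ same_tree G x y.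

Definition join_rel F G x y := forall e, Equivalence e -> compatible e ->
  (forall a b, same_tree F a b -> e a b) -> (forall a b, same_tree G a b -> e a b) -> e x y.

Definition fmeet F G := forest_of (meet_rel F G).
Definition fjoin F G := forest_of (join_rel F G).

Section MeetJoin.
Variables F G : {set {set I}}.
Hypotheses (iF : interval F) (iG : interval G).

Lemma meet_rel_equiv : Equivalence (meet_rel F G).
Proof.
have [eF eG] := (interval_equiv iF, interval_equiv iG).
split=> [x|x y [xyF xyG]|x y z [xyF xyG] [yzF yzG]]; split.
- by reflexivity.
- by reflexivity.
- by symmetry.
- by symmetry.
- by transitivity y.
- by transitivity y.
Qed.

Lemma meet_rel_compatible : compatible (meet_rel F G).
Proof.
move=> x1 y1 x2 y2 [F1 G1] [F2 G2] xy1 lca12.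
by split; [apply: (interval_compatible iF F1 F2)|apply: (interval_compatible iG G1 G2)].
Qed.

Lemma join_rel_equiv : Equivalence (join_rel F G).
Proof.
split=> [x|x y xy|x y z xy yz] e eE e_compat eF eG.
- by reflexivity.
- by symmetry; apply: xy.
- by transitivity y; [apply: xy|apply: yz].
Qed.

Lemma join_rel_compatible : compatible (join_rel F G).
Proof.
move=> x1 y1 x2 y2 xy1 xy2 ne lca12 e eE e_compat eF eG.
by apply: (e_compat _ y1 _ y2) => //; [apply: xy1|apply: xy2].
Qed.

Lemma interval_fmeet : interval (fmeet F G).
Proof. exact: interval_forest_of meet_rel_equiv meet_rel_compatible. Qed.

Lemma interval_fjoin : interval (fjoin F G).
Proof. exact: interval_forest_of join_rel_equiv join_rel_compatible. Qed.

Lemma same_tree_fmeet x y : same_tree (fmeet F G) x y <-> meet_rel F G x y.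
Proof. exact: same_tree_forest_of meet_rel_equiv x y. Qed.

Lemma same_tree_fjoin x y : same_tree (fjoin F G) x y <-> join_rel F G x y.
Proof. exact: same_tree_forest_of join_rel_equiv x y. Qed.

Lemma fmeetP : is_meet interval (@forest_le I) F G (fmeet F G).
Proof.
have iM := interval_fmeet; split=> //.
- by apply/(interval_leE iM iF) => x y /same_tree_fmeet [].
- by apply/(interval_leE iM iG) => x y /same_tree_fmeet [].
move=> W iW /(interval_leE iW iF) WF /(interval_leE iW iG) WG.
by apply/(interval_leE iW iM) => x y xy; apply/same_tree_fmeet; split; [apply: WF|apply: WG].
Qed.

Lemma fjoinP : is_join interval (@forest_le I) F G (fjoin F G).
Proof.
have iJ := interval_fjoin; split=> //.
- by apply/(interval_leE iF iJ) => x y xy; apply/same_tree_fjoin => e _ _ eF _; apply: eF.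
- by apply/(interval_leE iG iJ) => x y xy; apply/same_tree_fjoin => e _ _ _ eG; apply: eG.
move=> W iW /(interval_leE iF iW) FW /(interval_leE iG iW) GW.
apply/(interval_leE iJ iW) => x y /same_tree_fjoin; apply.
- exact: interval_equiv.
- exact: interval_compatible.
- exact: FW.
- exact: GW.
Qed.

End MeetJoin.

Lemma fmeet_fjoin_le (M Y Z U : {set {set I}}) :
  interval M -> interval Y -> interval Z -> interval U ->
  forest_le Y U -> forest_le Z U -> forest_le (fmeet M (fjoin Y Z)) (fmeet M U).
Proof.
move=> iM iY iZ iU YU ZU; have iYZ := interval_fjoin Y Z.
have [iMYZ MYZ_M MYZ_YZ _] := fmeetP iM iYZ; have [_ _ _ MU_glb] := fmeetP iM iU.
have [_ _ _ YZ_lub] := fjoinP iY iZ.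
apply: (MU_glb _ iMYZ MYZ_M).
exact: (interval_le_trans iYZ iMYZ iU MYZ_YZ (YZ_lub U iU YU ZU)).
Qed.

(* Listing the inner vertices of [T] by size puts every vertex after its children, so
   [cut k] keeps the first [k] of them and cuts the edges above all the others. *)
Definition inner_sorted : seq {set I} :=
  sort (fun A B : {set I} => #|A| <= #|B|) (enum [set C in T | 1 < #|C|]).

Definition cut_rel k (x y : I) : Prop :=
  x = y \/ exists2 C, C \in take k inner_sorted & (x \in C) && (y \in C).

Definition cut k := forest_of (cut_rel k).

Lemma mem_inner_sorted C : (C \in inner_sorted) = (C \in T) && (1 < #|C|).
Proof. by rewrite mem_sort mem_enum inE. Qed.

Lemma uniq_inner_sorted : uniq inner_sorted.
Proof. by rewrite sort_uniq enum_uniq. Qed.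

Lemma inner_sorted_card i j : i <= j -> j < size inner_sorted ->
  #|nth set0 inner_sorted i| <= #|nth set0 inner_sorted j|.
Proof.
move=> ij js; apply: (@sorted_leq_nth _ (fun A B : {set I} => #|A| <= #|B|)) => //.
- by move=> A B C; apply: leq_trans.
- by apply: sort_sorted => A B; apply: leq_total.
- by rewrite inE (leq_ltn_trans ij js).
Qed.

Lemma inner_take_tree C k : C \in take k inner_sorted -> C \in T.
Proof. by move/mem_take; rewrite mem_inner_sorted => /andP []. Qed.

Lemma inner_takeS C k : C \in take k inner_sorted -> C \in take k.+1 inner_sorted.
Proof. by move=> Ck; move: (Ck); rewrite !in_take ?(mem_take Ck) // ltnS => /ltnW. Qed.

Lemma cut_rel_equiv k : Equivalence (cut_rel k).
Proof.
split=> [x|x y|x y z]; first by left.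
  by case=> [->|[C Ck /andP [xC yC]]]; [left|right; exists C; rewrite ?xC ?yC].
case=> [->//|[C Ck /andP [xC yC]]] [<-|[D Dk /andP [yD zD]]]; first by right; exists C; rewrite ?xC.
have [CT DT] := (inner_take_tree Ck, inner_take_tree Dk).
case: (forest_laminar hTf CT DT yC yD) => [/subsetP CD|/subsetP DC].
- by right; exists D; rewrite ?zD ?CD.
- by right; exists C; rewrite ?xC ?DC.
Qed.

Lemma cut_rel_compatible k : compatible (cut_rel k).
Proof.
move=> x1 y1 x2 y2 [->|[C Ck /andP [x1C y1C]]]; first by rewrite eqxx.
move=> xy2 ne1 lca12; have := lca_neq ne1 lca12.
case: xy2 => [->|[D Dk /andP [x2D y2D]]]; first by rewrite eqxx.
move=> _; right; exists D; rewrite // x2D andbT.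
have : lca x2 y2 \subset D.
  by apply: hull_min; rewrite ?(inner_take_tree Dk) // subUset !sub1set x2D y2D.
by rewrite -lca12 => /subsetP; apply; apply: mem_lcal.
Qed.

Lemma interval_cut k : interval (cut k).
Proof. exact: interval_forest_of (@cut_rel_equiv k) (@cut_rel_compatible k). Qed.

Lemma same_tree_cut k x y : same_tree (cut k) x y <-> cut_rel k x y.
Proof. exact: same_tree_forest_of (@cut_rel_equiv k) x y. Qed.

Lemma cut_leS k : forest_le (cut k) (cut k.+1).
Proof.
apply/(interval_leE (interval_cut k) (interval_cut k.+1)) => x y /same_tree_cut xy.
by apply/same_tree_cut; case: xy => [->|[C Ck xyC]]; [left|right; exists C; rewrite ?inner_takeS].
Qed.

Lemma cut0_le F : interval F -> forest_le (cut 0) F.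
Proof.
move=> iF; apply/(interval_leE (interval_cut 0) iF) => x y /same_tree_cut [->|[C]].
  by case: iF => hF _ _; apply: same_tree_refl.
by rewrite take0.
Qed.

Lemma le_cut_size F : interval F -> forest_le F (cut (size inner_sorted)).
Proof.
move=> iF; apply/(interval_leE iF (interval_cut _)) => x y _; apply/same_tree_cut.
case: (eqVneq x y) => [->|xy]; first by left.
right; exists setT; rewrite ?in_setT // take_size mem_inner_sorted; case: hT => _ -> /=.
by apply: leq_trans (subset_leq_card (subsetT [set x; y])); rewrite cards2 xy.
Qed.

Section CutStep.
Variable k : nat.
Hypothesis k_lt : k < size inner_sorted.
Local Notation Ck := (nth set0 inner_sorted k).

Lemma Ck_inner : Ck \in T /\ 1 < #|Ck|.
Proof. by move: (mem_nth set0 k_lt); rewrite mem_inner_sorted => /andP. Qed.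

Lemma Ck_splits : exists C1 C2, splits T Ck C1 C2.
Proof. by have [CkT Ck_2] := Ck_inner; apply: forest_splits. Qed.

Lemma Ck_not_below C : C \in take k inner_sorted -> Ck \subset C -> False.
Proof.
move=> Ck_take CkC; have Cs := mem_take Ck_take; move: Ck_take; rewrite in_take // => iCk.
have : #|C| <= #|Ck|.
  by rewrite -{1}(nth_index set0 Cs); apply: inner_sorted_card => //; apply: ltnW.
move=> CCk; have /eqP CkE : Ck == C by rewrite eqEcard CkC CCk.
by move: iCk; rewrite -CkE index_uniq ?uniq_inner_sorted // ltnn.
Qed.

Lemma cut_rel_half C1 C2 p q : splits T Ck C1 C2 -> p \in C1 -> q \in C1 -> cut_rel k p q.
Proof.
move=> hs pC1 qC1; have [C1T _ _ _ _] := hs.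
case: (leqP #|C1| 1) => [C1_1|C1_2].
  case: (forest_small hTf C1T C1_1) => i C1E.
  by move: pC1 qC1; rewrite C1E !inE => /eqP -> /eqP ->; left.
right; exists C1; rewrite ?pC1 ?qC1 //.
have C1s : C1 \in inner_sorted by rewrite mem_inner_sorted C1T.
rewrite in_take // ltnNge; apply/negP => kC1.
have iC1 : index C1 inner_sorted < size inner_sorted by rewrite index_mem.
have := inner_sorted_card kC1 iC1; rewrite nth_index // => CkC1.
by have := leq_trans (proper_card (splits_proper hTf hs)) CkC1; rewrite ltnn.
Qed.

Lemma cut_rel_closed C1 C2 p x : splits T Ck C1 C2 -> cut_rel k p x -> p \in C1 -> x \in C1.
Proof.
move=> hs [<- //|[C Ck_take /andP [pC xC]]] pC1.
have CT := inner_take_tree Ck_take; have [C1T _ _ dis below] := hs.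
case: (forest_laminar hTf CT C1T pC pC1) => [/subsetP CC1|C1C]; first exact: CC1.
have pCk : p \in Ck by apply: (subsetP (splits_sub hs).1).
case: (forest_laminar hTf CT Ck_inner.1 pC pCk) => [CCk|CkC];
  last by case: (Ck_not_below Ck_take CkC).
have CCk' : C \proper Ck.
  by rewrite properEneq CCk andbT; apply/eqP => CE; apply: (Ck_not_below Ck_take); rewrite CE.
case: (below C CT CCk') => [/subsetP CC1|/subsetP CC2]; first exact: CC1.
by move: (CC2 p pC); rewrite (disjointFr dis pC1).
Qed.

Lemma lca_halves C1 C2 p q : splits T Ck C1 C2 -> p \in C1 -> q \in C2 -> lca p q = Ck.
Proof.
move=> hs pC1 qC2; have [C1C C2C] := splits_sub hs.
apply: (hull_splits hTf Ck_inner.1 hs).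
- by rewrite subUset !sub1set (subsetP C1C) ?(subsetP C2C).
- by exists p; rewrite ?inE ?eqxx.
- by exists q; rewrite ?inE ?eqxx ?orbT.
Qed.

Lemma not_cut_rel_halves C1 C2 p q : splits T Ck C1 C2 -> p \in C1 -> q \in C2 ->
  ~ cut_rel k p q.
Proof.
move=> hs pC1 qC2 /(cut_rel_closed hs)/(_ pC1) qC1; have [_ _ _ dis _] := hs.
by rewrite (disjointFr dis qC1) in qC2.
Qed.

Lemma cut_relS p q : cut_rel k.+1 p q <-> cut_rel k p q \/ (p \in Ck /\ q \in Ck).
Proof.
rewrite /cut_rel (take_nth set0 k_lt); split.
- case=> [->|[C]]; first by left; left.
  rewrite mem_rcons in_cons => /orP [/eqP ->|Ck_take] /andP [pC qC]; first by right.
  by left; right; exists C; rewrite ?pC ?qC.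
- case=> [[->|[C Ck_take /andP [pC qC]]]|[pCk qCk]]; first by left.
  + by right; exists C; rewrite ?mem_rcons ?in_cons ?Ck_take ?orbT ?pC ?qC.
  + by right; exists Ck; rewrite ?mem_rcons ?in_cons ?eqxx ?pCk ?qCk.
Qed.

Lemma cut_relS_halves C1 C2 p q : splits T Ck C1 C2 -> cut_rel k.+1 p q -> ~ cut_rel k p q ->
  (p \in C1 /\ q \in C2) \/ (p \in C2 /\ q \in C1).
Proof.
move=> hs /cut_relS [//|[pCk qCk]] npq; have [_ _ eC _ _] := hs.
move: pCk qCk; rewrite -eC !inE => /orP [pC1|pC2] /orP [qC1|qC2]; try by [left|right].
- by case: npq; apply: (cut_rel_half hs).
- by case: npq; apply: (cut_rel_half (splitsC hs)).
Qed.

Lemma lca_below_cut F x y : interval F -> forest_le F (cut k) -> same_tree F x y -> x != y ->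
  lca x y <> Ck.
Proof.
move=> iF /(interval_leE iF (interval_cut k)) Fcut /Fcut /same_tree_cut xy ne lcaE.
case: xy => [xy|[C Ck_take /andP [xC yC]]]; first by rewrite xy eqxx in ne.
apply: (Ck_not_below Ck_take); rewrite -lcaE; apply: hull_min; first exact: inner_take_tree Ck_take.
by rewrite subUset !sub1set xC yC.
Qed.

(* All pairs crossing between the halves have [lca] equal to [Ck], so compatibility
   puts them in the classes of [a0] and [b0]. *)
Lemma same_tree_halves C1 C2 Z a0 b0 p q : splits T Ck C1 C2 -> interval Z ->
  a0 \in C1 -> b0 \in C2 -> same_tree Z a0 b0 ->
  same_tree Z p q -> p \in C1 -> q \in C2 -> same_tree Z p a0 /\ same_tree Z q b0.
Proof.
move=> hs iZ a0C1 b0C2 Za0b0 Zpq pC1 qC2.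
have Zc := interval_compatible iZ; have [_ _ _ dis _] := hs.
have pq : p != q by apply: contraTneq qC2 => <-; rewrite (disjointFr dis pC1).
have lcaE : lca p q = lca a0 b0 by rewrite !(lca_halves hs).
split; first exact: Zc Zpq Za0b0 pq lcaE.
apply: (Zc q p b0 a0 (same_tree_sym Zpq) (same_tree_sym Za0b0)); first by rewrite eq_sym.
by rewrite lcaC lcaE lcaC.
Qed.

Lemma crossing_pair C1 C2 F : splits T Ck C1 C2 -> interval F ->
  forest_le F (cut k.+1) -> ~ forest_le F (cut k) ->
  exists a0 b0, [/\ a0 \in C1, b0 \in C2 & same_tree F a0 b0].
Proof.
move=> hs iF /(interval_leE iF (interval_cut _)) FcutS nFcut.
have [a [b [Fab nab]]] : exists a b, same_tree F a b /\ ~ cut_rel k a b.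
  apply: NNPP => none; apply: nFcut; apply/(interval_leE iF (interval_cut k)) => x y Fxy.
  by apply/same_tree_cut; apply: NNPP => nxy; apply: none; exists x, y.
have /same_tree_cut abS := FcutS _ _ Fab.
case: (cut_relS_halves hs abS nab) => [[aC1 bC2]|[aC2 bC1]]; first by exists a, b.
by exists b, a; split=> //; apply: same_tree_sym.
Qed.

Lemma le_by_halves C1 C2 Z G : splits T Ck C1 C2 -> interval Z -> interval G ->
  forest_le Z (cut k.+1) ->
  (forall p q, same_tree Z p q -> cut_rel k p q -> same_tree G p q) ->
  (forall p q, same_tree Z p q -> p \in C1 -> q \in C2 -> same_tree G p q) ->
  forest_le Z G.
Proof.
move=> hs iZ iG /(interval_leE iZ (interval_cut _)) ZcutS Z_cut Z_cross.
apply/(interval_leE iZ iG) => p q Zpq; have /same_tree_cut pqS := ZcutS _ _ Zpq.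
case: (classic (cut_rel k p q)) => [pq|npq]; first exact: Z_cut.
case: (cut_relS_halves hs pqS npq) => [[pC1 qC2]|[pC2 qC1]]; first exact: Z_cross.
by apply/same_tree_sym/Z_cross => //; apply: same_tree_sym.
Qed.

Lemma cut_cover F : interval F -> forest_le (cut k) F -> forest_le F (cut k.+1) ->
  F = cut k \/ F = cut k.+1.
Proof.
move=> iF cutF FcutS; have [hF _ _] := iF.
case: (classic (forest_le F (cut k))) => [Fcut|nFcut].
  by left; exact: interval_le_anti iF (interval_cut k) Fcut cutF.
right; apply: (interval_le_anti iF (interval_cut k.+1) FcutS).
case: Ck_splits => C1 [C2 hs]; have [_ _ eC _ _] := hs.
have [a0 [b0 [a0C1 b0C2 Fa0b0]]] := crossing_pair hs iF FcutS nFcut.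
have cut_F x y : cut_rel k x y -> same_tree F x y.
  by move=> /same_tree_cut; apply: (interval_le_same_tree (interval_cut k) iF cutF).
have to_a0 z : z \in Ck -> same_tree F z a0.
  rewrite -eC inE => /orP [zC1|zC2]; first exact/cut_F/(cut_rel_half hs).
  apply: (same_tree_trans hF (cut_F _ _ (cut_rel_half (splitsC hs) zC2 b0C2))).
  exact: same_tree_sym.
apply/(interval_leE (interval_cut _) iF) => p q /same_tree_cut /cut_relS [/cut_F //|[pCk qCk]].
by apply: (same_tree_trans hF (to_a0 p pCk)); apply/same_tree_sym/to_a0.
Qed.

Section Glue.
Variables (C1 C2 : {set I}) (J : {set {set I}}) (a0 b0 : I).
Hypotheses (hs : splits T Ck C1 C2) (iJ : interval J) (Jcut : forest_le J (cut k)).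
Hypotheses (a0C1 : a0 \in C1) (b0C2 : b0 \in C2).

Definition glue x z := same_tree J x z \/
  (same_tree J x a0 /\ same_tree J z b0) \/ (same_tree J x b0 /\ same_tree J z a0).

Let hJ : is_forest J. Proof. by case: iJ. Qed.

Let J_cut_rel x y : same_tree J x y -> cut_rel k x y.
Proof. by move/(interval_le_same_tree iJ (interval_cut k) Jcut)/same_tree_cut. Qed.

Let J_half C1' C2' x a : splits T Ck C1' C2' -> same_tree J x a -> a \in C1' -> x \in C1'.
Proof. by move=> hs' /same_tree_sym /J_cut_rel ax; apply: (cut_rel_closed hs' ax). Qed.

Let lca_glued x y : same_tree J x a0 -> same_tree J y b0 -> lca x y = Ck.
Proof.
move=> xa0 yb0; apply: (lca_halves hs); first exact: J_half hs xa0 a0C1.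
exact: J_half (splitsC hs) yb0 b0C2.
Qed.

Lemma glue_equiv : Equivalence glue.
Proof.
have nJab : ~ same_tree J a0 b0 by move/J_cut_rel; apply: not_cut_rel_halves hs a0C1 b0C2.
have tJ := same_tree_trans hJ; have sJ := @same_tree_sym _ J.
split=> [x|x y|x y z]; first by left; apply: same_tree_refl.
  by case=> [xy|[[xa yb]|[xb ya]]]; [left; apply: sJ|right; right|right; left].
case=> [xy|[[xa yb]|[xb ya]]] [yz|[[ya' zb]|[yb' za]]].
- by left; apply: tJ xy yz.
- by right; left; split; [apply: tJ xy ya'|].
- by right; right; split; [apply: tJ xy yb'|].
- by right; left; split; [|apply: tJ (sJ _ _ yz) yb].
- by case: nJab; apply: tJ (sJ _ _ ya') yb.
- by left; apply: tJ xa (sJ _ _ za).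
- by right; right; split; [|apply: tJ (sJ _ _ yz) ya].
- by left; apply: tJ xb (sJ _ _ zb).
- by case: nJab; apply: tJ (sJ _ _ ya) yb'.
Qed.

Lemma glue_compatible : compatible glue.
Proof.
have tJ := same_tree_trans hJ; have sJ := @same_tree_sym _ J.
have noJ := lca_below_cut iJ Jcut.
move=> x1 y1 x2 y2 h1 h2 ne1 lca12; have ne2 := lca_neq ne1 lca12.
case: h1 => [J1|[[x1a y1b]|[x1b y1a]]]; case: h2 => [J2|[[x2a y2b]|[x2b y2a]]].
- by left; apply: (interval_compatible iJ J1 J2 ne1 lca12).
- by case: (noJ _ _ J1 ne1); rewrite lca12 lca_glued.
- by case: (noJ _ _ J1 ne1); rewrite lca12 lcaC lca_glued.
- by case: (noJ _ _ J2 ne2); rewrite -lca12 lca_glued.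
- by left; apply: tJ x1a (sJ _ _ x2a).
- by right; left.
- by case: (noJ _ _ J2 ne2); rewrite -lca12 lcaC lca_glued.
- by right; right.
- by left; apply: tJ x1b (sJ _ _ x2b).
Qed.

Lemma interval_glue : interval (forest_of glue).
Proof. exact: interval_forest_of glue_equiv glue_compatible. Qed.

Lemma le_glue : forest_le J (forest_of glue).
Proof.
apply/(interval_leE iJ interval_glue) => x y xy.
by apply/(same_tree_forest_of glue_equiv); left.
Qed.

Lemma meet_cut_glue : forest_le (fmeet (cut k) (forest_of glue)) J.
Proof.
have iM := interval_fmeet (interval_cut k) interval_glue.
apply/(interval_leE iM iJ) => x z /(same_tree_fmeet (interval_cut k) interval_glue).
case=> /same_tree_cut xz /(same_tree_forest_of glue_equiv) [//|[[xa zb]|[xb za]]].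
- by case: (not_cut_rel_halves hs (J_half hs xa a0C1) (J_half (splitsC hs) zb b0C2)).
- case: (not_cut_rel_halves hs (J_half hs za a0C1) (J_half (splitsC hs) xb b0C2)).
  exact: (Equivalence_Symmetric (Equivalence := cut_rel_equiv k)).
Qed.

End Glue.

Lemma cut_modular (Y Z : {set {set I}}) : interval Y -> interval Z ->
  forest_le Y (cut k) -> forest_le Z (cut k.+1) ->
  forest_le (fmeet (cut k) (fjoin Y Z)) (fjoin Y (fmeet (cut k) Z)).
Proof.
move=> iY iZ Ycut ZcutS.
have icut := interval_cut k; have iM := interval_fmeet icut iZ.
have [_ YJ MJ J_lub] := fjoinP iY iM.
move: (fjoin Y (fmeet (cut k) Z)) (interval_fjoin Y (fmeet (cut k) Z)) YJ MJ J_lub.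
move=> J iJ YJ MJ J_lub.
have Jcut : forest_le J (cut k) by apply: (J_lub _ icut Ycut); case: (fmeetP icut iZ).
have ZM_J p q : same_tree Z p q -> cut_rel k p q -> same_tree J p q.
  move=> Zpq /same_tree_cut cpq; apply: (interval_le_same_tree iM iJ MJ).
  by apply/(same_tree_fmeet icut iZ); split.
have meet_le U : interval U -> forest_le Y U -> forest_le Z U -> forest_le (fmeet (cut k) U) J ->
    forest_le (fmeet (cut k) (fjoin Y Z)) J.
  move=> iU YU ZU; have iMYZ := interval_fmeet icut (interval_fjoin Y Z).
  exact: interval_le_trans (interval_fmeet icut iU) iMYZ iJ (fmeet_fjoin_le icut iY iZ iU YU ZU).
case: Ck_splits => C1 [C2 hs].
case: (classic (forest_le Z (cut k))) => [Zcut|nZcut].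
  apply: (meet_le J iJ YJ); last by case: (fmeetP icut iJ).
  apply: (le_by_halves hs iZ iJ ZcutS ZM_J) => p q Zpq pC1 qC2.
  case: (not_cut_rel_halves hs pC1 qC2).
  by apply/same_tree_cut; apply: (interval_le_same_tree iZ icut Zcut).
have [a0 [b0 [a0C1 b0C2 Za0b0]]] := crossing_pair hs iZ ZcutS nZcut.
have iU := interval_glue hs iJ Jcut a0C1 b0C2.
have JU := le_glue hs iJ Jcut a0C1 b0C2.
apply: (meet_le _ iU (interval_le_trans iJ iY iU YJ JU) _ (meet_cut_glue hs iJ Jcut a0C1 b0C2)).
apply: (le_by_halves hs iZ iU ZcutS) => p q Zpq.
  by move=> pq; apply: (interval_le_same_tree iJ iU JU); apply: ZM_J.
move=> pC1 qC2; have [Zpa0 Zqb0] := same_tree_halves hs iZ a0C1 b0C2 Za0b0 Zpq pC1 qC2.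
apply/(same_tree_forest_of (glue_equiv hs iJ Jcut a0C1 b0C2)); right; left.
split; apply: ZM_J; [exact: Zpa0|exact: cut_rel_half hs pC1 a0C1|exact: Zqb0|].
exact: cut_rel_half (splitsC hs) qC2 b0C2.
Qed.

Lemma cut_exchange (W Z : {set {set I}}) : interval W -> interval Z -> forest_le W Z ->
  forest_le Z (cut k.+1) -> ~ forest_le W (cut k) -> forest_le Z (fjoin W (fmeet Z (cut k))).
Proof.
move=> iW iZ WZ ZcutS nWcut.
have icut := interval_cut k; have iM := interval_fmeet iZ icut.
have [_ WJ MJ _] := fjoinP iW iM.
move: (fjoin W (fmeet Z (cut k))) (interval_fjoin W (fmeet Z (cut k))) WJ MJ => J iJ WJ MJ.
have [hJ _ _] := iJ.
have ZM_J p q : same_tree Z p q -> cut_rel k p q -> same_tree J p q.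
  move=> Zpq /same_tree_cut cpq; apply: (interval_le_same_tree iM iJ MJ).
  by apply/(same_tree_fmeet iZ icut); split.
case: Ck_splits => C1 [C2 hs].
have WcutS := interval_le_trans iZ iW (interval_cut _) WZ ZcutS.
have [a0 [b0 [a0C1 b0C2 Wa0b0]]] := crossing_pair hs iW WcutS nWcut.
have Za0b0 := interval_le_same_tree iW iZ WZ Wa0b0.
apply: (le_by_halves hs iZ iJ ZcutS ZM_J) => p q Zpq pC1 qC2.
have [Zpa0 Zqb0] := same_tree_halves hs iZ a0C1 b0C2 Za0b0 Zpq pC1 qC2.
apply: (same_tree_trans hJ (ZM_J _ _ Zpa0 (cut_rel_half hs pC1 a0C1))).
apply: (same_tree_trans hJ (interval_le_same_tree iW iJ WJ Wa0b0)); apply: same_tree_sym.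
exact: ZM_J _ _ Zqb0 (cut_rel_half (splitsC hs) qC2 b0C2).
Qed.

End CutStep.

End Tree.

Theorem corollary4p5 (I : finType) (T : {set {set I}}) :
  is_tree T -> supersolvable (interval0 T) (@forest_le I).
Proof.
move=> hT.
apply: (supersolvable_of_modular_chain (interval_le_refl hT) (interval_le_anti hT)
  (interval_le_trans hT) (fjoinP hT) (fmeetP hT) (interval_cut hT) (cut0_le hT)
  (le_cut_size hT) (cut_leS hT)).
- by move=> k F k_lt iF; apply: cut_cover.
- by move=> k Y Z k_lt iY iZ; apply: cut_modular.
- by move=> k W Z k_lt iW iZ; apply: cut_exchange.
Qed.
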